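(* In the 1SDI setting where Alice measures $A_0=\sigma_x$, $A_1=\sigma_y$, Bob measures $B_0=\sigma_x$, $B_1=\sigma_y$, and Charlie is a black box, the Mermin family $P^V_{MF}$ ($0<V\le1$) demonstrates tripartite steering if and only if $V>\frac1{\sqrt2}$.
   Context: Outcomes and settings: $a,b,c,x,y,z\in\{0,1\}$. For a qubit observable $O$ with eigenvalues $\pm1$, the measurement has projectors $M_0=(\mathbb 1+O)/2$, $M_1=(\mathbb 1-O)/2$; $M^A_{a|x}$, $M^B_{b|y}$ denote the projectors of $A_x$, $B_y$. Mermin family: $P^V_{MF}(abc|xyz)=\frac{1+(-1)^{a\oplus b\oplus c\oplus xy\oplus yz\oplus xz}\,\delta_{x\oplus y\oplus1,z}\,V}{8}$. 1SDI fully LHS-LHV model: $P(abc|xyz)=\sum_\lambda q_\lambda \mathrm{Tr}(M^A_{a|x}\rho^\lambda_A)\mathrm{Tr}(M^B_{b|y}\rho^\lambda_B)P_\lambda(c|z)$ with probabilities $q_\lambda$, qubit states $\rho^\lambda_A,\rho^\lambda_B$ and arbitrary conditional distributions $P_\lambda(c|z)$. Tripartite steering in the 1SDI scenario: $P$ demonstrates tripartite steering iff (i) it admits no 1SDI fully LHS-LHV model, and (ii) there is no finite $d$, state $\rho^{ABC}=\sum_\lambda r_\lambda\rho^\lambda_{AB}\otimes\rho^\lambda_C$ on $\mathbb C^2\otimes\mathbb C^2\otimes\mathbb C^d$ (separable across $AB|C$) and POVMs $\{N_{c|z}\}_c$ on $\mathbb C^d$ with $P(abc|xyz)=\mathrm{Tr}[(M^A_{a|x}\otimes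 M^B_{b|y}\otimes N_{c|z})\rho^{ABC}]$. *)

(* Complex scalars: an arbitrary numClosedFieldType C
   (algebraically closed field with conjugation and order, e.g. the complex numbers). *)
From HB Require Import structures.
From mathcomp Require Import all_boot all_order all_algebra.
Set Implicit Arguments. Unset Strict Implicit. Unset Printing Implicit Defensive.
Import Order.TTheory GRing.Theory Num.Theory.
Local Open Scope ring_scope.

Section Quantum.
Variable C : numClosedFieldType.

Definition adjmx m n (A : 'M[C]_(m, n)) : 'M[C]_(n, m) := (map_mx Num.conj A)^T.

(* positive semidefinite: v^dagger A v >= 0 for every complex vector v
   (over C this also forces A to be Hermitian) *)
Definition psd n (A : 'M[C]_n) : Prop :=
  forall v : 'cV[C]_n, 0 <= (adjmx v *m A *m v) 0 0.

Definition is_state n (rho : 'M[C]_n) : Prop := psd rho /\ \tr rho = 1.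

Definition is_povm n (N : bool -> 'M[C]_n) : Prop :=
  (forall c, psd (N c)) /\ N false + N true = 1%:M.

(* splitting an index of C^(m*n) = C^m (x) C^n *)
Definition split_idx m n (k : 'I_(m * n)) : 'I_m * 'I_n :=
  enum_val (cast_ord (esym (mxvec_cast m n)) k).

Definition kron m1 n1 m2 n2 (A : 'M[C]_(m1, n1)) (B : 'M[C]_(m2, n2))
  : 'M[C]_(m1 * m2, n1 * n2) :=
  \matrix_(i, j) (A (split_idx i).1 (split_idx j).1 * B (split_idx i).2 (split_idx j).2).

Definition sigma_x : 'M[C]_2 :=
  \matrix_(i, j) (if (val i == val j) then 0 else 1).
Definition sigma_y : 'M[C]_2 :=
  \matrix_(i, j) (if (val i == val j) then 0
                  else if val i == 0%N then - 'i else 'i).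

Definition proj_of (O : 'M[C]_2) (a : bool) : 'M[C]_2 :=
  if a then 2^-1 *: (1%:M - O) else 2^-1 *: (1%:M + O).

Definition obs (x : bool) : 'M[C]_2 := if x then sigma_y else sigma_x.
Definition MA (a x : bool) : 'M[C]_2 := proj_of (obs x) a.
Definition MB (b y : bool) : 'M[C]_2 := proj_of (obs y) b.

(* behaviours P(abc|xyz) *)
Definition behaviour := bool -> bool -> bool -> bool -> bool -> bool -> C.

Definition mermin (V : C) : behaviour := fun a b c x y z =>
  (1 + (-1) ^+ (a (+) b (+) c (+) (x && y) (+) (y && z) (+) (x && z))
       * (if (x (+) y (+) true) == z then 1 else 0) * V) / 8.

Definition prob_vec n (q : 'I_n -> C) : Prop :=
  (forall l, 0 <= q l) /\ \sum_(l < n) q l = 1.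

Definition cond_dist (p : bool -> bool -> C) : Prop :=
  (forall c z, 0 <= p c z) /\ (forall z, p false z + p true z = 1).

(* 1SDI fully LHS-LHV model (finitely many hidden variables lambda) *)
Definition lhs_lhv (P : behaviour) : Prop :=
  exists (n : nat) (q : 'I_n -> C) (rhoA rhoB : 'I_n -> 'M[C]_2)
         (pl : 'I_n -> bool -> bool -> C),
    prob_vec q /\ (forall l, is_state (rhoA l)) /\ (forall l, is_state (rhoB l))
    /\ (forall l, cond_dist (pl l))
    /\ forall a b c x y z,
         P a b c x y z = \sum_(l < n) q l * \tr (MA a x *m rhoA l)
                                        * \tr (MB b y *m rhoB l) * pl l c z.

Definition ab_c_separable_model (P : behaviour) : Prop :=
  exists (d n : nat) (r : 'I_n -> C) (rhoAB : 'I_n -> 'M[C]_(2 * 2))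
         (rhoC : 'I_n -> 'M[C]_d) (N : bool -> bool -> 'M[C]_d),
    prob_vec r /\ (forall l, is_state (rhoAB l)) /\ (forall l, is_state (rhoC l))
    /\ (forall z, is_povm (N^~ z))
    /\ let rho : 'M[C]_(2 * 2 * d) := \sum_(l < n) r l *: kron (rhoAB l) (rhoC l) in
       forall a b c x y z,
         P a b c x y z = \tr (kron (kron (MA a x) (MB b y)) (N c z) *m rho).

Definition tripartite_steering (P : behaviour) : Prop :=
  ~ lhs_lhv P /\ ~ ab_c_separable_model P.

End Quantum.

(* Both kinds of models excluded by tripartite steering, fully LHS-LHV ones and quantum
   models separable across AB|C, give behaviours of the form
     P(abc|xyz) = sum_l r_l Tr[(M_a|x (x) M_b|y) rho_l] R_l(c|z)
   with two-qubit states rho_l and conditional distributions R_l.  The Mermin functional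
   takes the value 4V on the Mermin family, while on such a mixture it averages quantities
   s1 (E_01 + E_10) + s2 (E_00 - E_11) with signs s1, s2 and two-qubit correlators E_xy, each
   at most 2 sqrt 2 by a sum-of-squares certificate.  Hence V > 1/sqrt 2 forces steering.
   Conversely, for V <= 1/sqrt 2 Charlie holds a uniformly random pair of signs (s1, s2) and
   outputs one of them according to z, while Alice and Bob share
   1/2 (|w><w| + (1 - |g|^2) |11><11|) with w = |00> + g |11> and g = V (s1 + i s2); since
   |g|^2 = 2 V^2 <= 1 this is a state, and the resulting AB|C-separable model reproduces
   the Mermin family. *)

From HB Require Import structures.
From mathcomp Require Import all_boot all_order all_algebra.
From mathcomp Require Import ring.
Set Implicit Arguments. Unset Strict Implicit. Unset Printing Implicit Defensive.
Import Order.TTheory GRing.Theory Num.Theory.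
Local Open Scope ring_scope.

Section Kronecker.
Variable C : numClosedFieldType.

Lemma split_idx_mxvec_index m n (i : 'I_m) (j : 'I_n) :
  split_idx (mxvec_index i j) = (i, j).
Proof. by rewrite /split_idx /mxvec_index cast_ordK enum_rankK. Qed.

Lemma kronE m1 n1 m2 n2 (A : 'M[C]_(m1, n1)) (B : 'M[C]_(m2, n2)) i1 i2 j1 j2 :
  kron A B (mxvec_index i1 i2) (mxvec_index j1 j2) = A i1 j1 * B i2 j2.
Proof. by rewrite /kron mxE !split_idx_mxvec_index. Qed.

Lemma big_mxvec_index m n (F : 'I_(m * n) -> C) :
  \sum_(k < m * n) F k = \sum_(i < m) \sum_(j < n) F (mxvec_index i j).
Proof.
rewrite (reindex (fun p : 'I_m * 'I_n => mxvec_index p.1 p.2)) /=.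
  by rewrite pair_big.
have [g h1 h2] := curry_mxvec_bij m n.
exists g => [[i j] _|k _]; [exact: (h1 (i, j)) | by move: (h2 k isT); case: (g k)].
Qed.

Lemma mulmx_kron m1 n1 p1 m2 n2 p2 (A : 'M[C]_(m1, n1)) (B : 'M[C]_(m2, n2))
  (A' : 'M[C]_(n1, p1)) (B' : 'M[C]_(n2, p2)) :
  kron A B *m kron A' B' = kron (A *m A') (B *m B').
Proof.
apply/matrixP => i j; case/mxvec_indexP: i => i1 i2; case/mxvec_indexP: j => j1 j2.
rewrite mxE kronE !mxE big_mxvec_index big_distrl /=; apply: eq_bigr => k1 _.
rewrite big_distrr /=; apply: eq_bigr => k2 _; rewrite !kronE; ring.
Qed.

Lemma mxtrace_kron m n (A : 'M[C]_m) (B : 'M[C]_n) : \tr (kron A B) = \tr A * \tr B.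
Proof.
rewrite /mxtrace big_mxvec_index big_distrl /=; apply: eq_bigr => i _.
by rewrite big_distrr /=; apply: eq_bigr => j _; rewrite kronE.
Qed.

Lemma kronBl m1 n1 m2 n2 (A A' : 'M[C]_(m1, n1)) (B : 'M[C]_(m2, n2)) :
  kron (A - A') B = kron A B - kron A' B.
Proof. by apply/matrixP => i j; rewrite !mxE mulrBl. Qed.

Lemma kronBr m1 n1 m2 n2 (A : 'M[C]_(m1, n1)) (B B' : 'M[C]_(m2, n2)) :
  kron A (B - B') = kron A B - kron A B'.
Proof. by apply/matrixP => i j; rewrite !mxE mulrBr. Qed.

Lemma mxtrace_kron_mul m n (A : 'M[C]_m) (B : 'M[C]_n) (K : 'M[C]_(m * n)) :
  \tr (kron A B *m K) = \sum_i1 \sum_i2 \sum_j1 \sum_j2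
     A i1 j1 * B i2 j2 * K (mxvec_index j1 j2) (mxvec_index i1 i2).
Proof.
rewrite /mxtrace big_mxvec_index; apply: eq_bigr => i1 _; apply: eq_bigr => i2 _.
rewrite mxE big_mxvec_index; apply: eq_bigr => j1 _; apply: eq_bigr => j2 _.
by rewrite kronE.
Qed.

Lemma mxtrace_mxvec_index m n (K : 'M[C]_(m * n)) :
  \tr K = \sum_i1 \sum_i2 K (mxvec_index i1 i2) (mxvec_index i1 i2).
Proof. by rewrite /mxtrace big_mxvec_index. Qed.

End Kronecker.

Section Adjoint.
Variable C : numClosedFieldType.
Local Open Scope sesquilinear_scope.
Import Num.Def.

Lemma adjmxE m n (A : 'M[C]_(m, n)) : adjmx A = A ^t conjC.
Proof. by apply/matrixP => i j; rewrite !mxE. Qed.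

Lemma adjmx_mul m n p (A : 'M[C]_(m, n)) (B : 'M[C]_(n, p)) :
  adjmx (A *m B) = adjmx B *m adjmx A.
Proof. by rewrite /adjmx map_mxM trmx_mul. Qed.

Lemma adjmxK m n (A : 'M[C]_(m, n)) : adjmx (adjmx A) = A.
Proof. by apply/matrixP => i j; rewrite !mxE conjCK. Qed.

Lemma adjmxD m n (A B : 'M[C]_(m, n)) : adjmx (A + B) = adjmx A + adjmx B.
Proof. by apply/matrixP => i j; rewrite !mxE rmorphD. Qed.

Lemma adjmxZ m n (a : C) (A : 'M[C]_(m, n)) : adjmx (a *: A) = a^* *: adjmx A.
Proof. by apply/matrixP => i j; rewrite !mxE rmorphM. Qed.

Lemma adjmx_kron m1 n1 m2 n2 (A : 'M[C]_(m1, n1)) (B : 'M[C]_(m2, n2)) :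
  adjmx (kron A B) = kron (adjmx A) (adjmx B).
Proof. by apply/matrixP => i j; rewrite !mxE rmorphM. Qed.

Lemma adjmx_delta n (i : 'I_n) : adjmx (delta_mx i 0 : 'cV[C]_n) = delta_mx 0 i.
Proof. by apply/matrixP => k l; rewrite !mxE rmorph_nat andbC. Qed.

Lemma form_delta n (A : 'M[C]_n) i j :
  (adjmx (delta_mx i 0 : 'cV[C]_n) *m A *m (delta_mx j 0 : 'cV[C]_n)) 0 0 = A i j.
Proof. by rewrite adjmx_delta -rowE -colE !mxE. Qed.

Lemma mxtrace_mul_outer n (K : 'M[C]_n) (w : 'cV[C]_n) :
  \tr (K *m (w *m adjmx w)) = (adjmx w *m K *m w) 0 0.
Proof. by rewrite mulmxA mxtrace_mulC trace_mx11 mulmxA. Qed.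

Lemma delta_mx_outer n (i : 'I_n) :
  delta_mx i i = (delta_mx i 0 : 'cV[C]_n) *m adjmx (delta_mx i 0).
Proof. by rewrite adjmx_delta mul_delta_mx. Qed.

Lemma mxtrace_mul_delta n (A : 'M[C]_n) i : \tr (A *m delta_mx i i) = A i i.
Proof. by rewrite delta_mx_outer mxtrace_mul_outer form_delta. Qed.

End Adjoint.

Section PositiveSemidefinite.
Variable C : numClosedFieldType.

Lemma psd_gram m n (M : 'M[C]_(m, n)) : psd (adjmx M *m M).
Proof.
move=> v; have -> : adjmx v *m (adjmx M *m M) *m v = adjmx (M *m v) *m (M *m v).
  by rewrite adjmx_mul !mulmxA.
rewrite mxE.
by apply: sumr_ge0 => k _; rewrite !mxE mulrC mul_conjC_ge0.
Qed.

Lemma psd_outer n (w : 'cV[C]_n) : psd (w *m adjmx w).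
Proof. by rewrite -{1}(adjmxK w); apply: psd_gram. Qed.

Lemma psdD n (A B : 'M[C]_n) : psd A -> psd B -> psd (A + B).
Proof. by move=> hA hB v; rewrite mulmxDr mulmxDl mxE addr_ge0. Qed.

Lemma psdZ n (a : C) (A : 'M[C]_n) : 0 <= a -> psd A -> psd (a *: A).
Proof. by move=> ha hA v; rewrite -scalemxAr -scalemxAl mxE mulr_ge0. Qed.

Lemma psd_diag n (d : 'rV[C]_n) : (forall i, 0 <= d 0 i) -> psd (diag_mx d).
Proof.
move=> hd v; rewrite mul_mx_diag mxE; apply: sumr_ge0 => k _.
by rewrite !mxE -mulrA mulrC -mulrA mulr_ge0 ?mul_conjC_ge0.
Qed.

Definition sesq n (A : 'M[C]_n) (u v : 'cV[C]_n) : C := (adjmx u *m A *m v) 0 0.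

Lemma sesqDl n (A : 'M[C]_n) u u' v : sesq A (u + u') v = sesq A u v + sesq A u' v.
Proof. by rewrite /sesq adjmxD !mulmxDl mxE. Qed.

Lemma sesqDr n (A : 'M[C]_n) u v v' : sesq A u (v + v') = sesq A u v + sesq A u v'.
Proof. by rewrite /sesq !mulmxDr mxE. Qed.

Lemma sesqZl n (A : 'M[C]_n) c u v : sesq A (c *: u) v = c^* * sesq A u v.
Proof. by rewrite /sesq adjmxZ -!scalemxAl mxE. Qed.

Lemma sesqZr n (A : 'M[C]_n) c u v : sesq A u (c *: v) = c * sesq A u v.
Proof. by rewrite /sesq -!scalemxAr mxE. Qed.

Lemma sesq_delta_comb n (A : 'M[C]_n) i j (c : C) :
  let u := delta_mx i 0 + c *: delta_mx j 0 in
  sesq A u u = A i i + c * A i j + c^* * A j i + c^* * c * A j j.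
Proof. by rewrite /= !sesqDl !sesqDr !sesqZl !sesqZr /sesq !form_delta; ring. Qed.

(* Over [C], nonnegativity of the form on [e_i + e_j] and [e_i + 'i e_j] pins down
   [A j i] as the conjugate of [A i j]. *)
Lemma psd_adjmx n (A : 'M[C]_n) : psd A -> adjmx A = A.
Proof.
move=> hA; apply/matrixP => i j; rewrite !mxE.
have real c : let u := delta_mx i 0 + c *: delta_mx j 0 in (sesq A u u)^* = sesq A u u.
  exact/geC0_conj/hA.
have hii : (A i i)^* = A i i by rewrite -form_delta; exact/geC0_conj/hA.
have hjj : (A j j)^* = A j j by rewrite -form_delta; exact/geC0_conj/hA.
have h1 := real 1; have h2 := real 'i.
rewrite /= !sesq_delta_comb !rmorphD !rmorphM /= ?conjCK conjCi rmorph1 hii hjj in h1 h2.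
have hi : ('i : C) * 'i = -1 by rewrite -expr2 sqrCi.
set x := A i j in h1 h2 *; set y := A j i in h1 h2 *.
set a := A i i in h1 h2; set b := A j j in h1 h2.
have : 2 * (y^* - x) =
  ((a + 1 * x^* + 1 * y^* + 1 * 1 * b) - (a + 1 * x + 1 * y + 1 * 1 * b))
  - 'i * ((a + - 'i * x^* + 'i * y^* + 'i * - 'i * b)
          - (a + 'i * x + - 'i * y + - 'i * 'i * b)).
  by ring: hi.
rewrite h1 h2 !subrr mulr0 subr0 => /eqP.
by rewrite mulf_eq0 pnatr_eq0 /= subr_eq0 => /eqP.
Qed.

Lemma psd_factor n (A : 'M[C]_n) : psd A -> exists M : 'M[C]_n, A = adjmx M *m M.
Proof.
move=> hA.
have hN : A \is normalmx by apply/normalmxP; rewrite -adjmxE psd_adjmx.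
have := orthomx_spectralP hN.
set P := spectralmx A; set d := spectral_diag A => eA.
have hPP : P *m adjmx P = 1%:M by rewrite adjmxE; exact/unitarymxP/spectral_unitarymx.
rewrite invmx_unitary ?spectral_unitarymx // -adjmxE in eA.
have hD : P *m A *m adjmx P = diag_mx d.
  by rewrite eA !mulmxA hPP mul1mx -mulmxA hPP mulmx1.
have d_ge0 i : 0 <= d 0 i.
  have := hA (adjmx P *m delta_mx i 0).
  by rewrite adjmx_mul adjmxK !mulmxA -(mulmxA _ P A) -(mulmxA _ (P *m A)) hD form_delta mxE eqxx.
exists (diag_mx (\row_i sqrtC (d 0 i)) *m P).
rewrite adjmx_mul !mulmxA -(mulmxA _ _ (diag_mx _)).
suff -> : adjmx (diag_mx (\row_i sqrtC (d 0 i))) *m diag_mx (\row_i sqrtC (d 0 i))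
   = diag_mx d by rewrite eA.
apply/matrixP => k l; rewrite mul_mx_diag !mxE.
have [->|_] := eqVneq k l; last by rewrite !mulr0n rmorph0 mul0r.
by rewrite !mulr1n geC0_conj ?sqrtC_ge0 // -expr2 sqrtCK.
Qed.

Lemma mxtrace_mul_psd_ge0 n (A B : 'M[C]_n) : psd A -> psd B -> 0 <= \tr (A *m B).
Proof.
move=> hA /psd_factor [M ->].
rewrite mulmxA mxtrace_mulC mulmxA /mxtrace; apply: sumr_ge0 => i _.
have := hA (adjmx M *m delta_mx i 0).
by rewrite adjmx_mul adjmxK !mulmxA -(mulmxA _ M A) -(mulmxA _ (M *m A)) form_delta.
Qed.

Lemma psd_kron m n (A : 'M[C]_m) (B : 'M[C]_n) : psd A -> psd B -> psd (kron A B).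
Proof.
move=> /psd_factor [M ->] /psd_factor [K ->].
by rewrite -mulmx_kron -adjmx_kron; apply: psd_gram.
Qed.

Lemma delta_mx_state n (i : 'I_n) : is_state (delta_mx i i : 'M[C]_n).
Proof.
split; first by rewrite delta_mx_outer; apply: psd_outer.
by rewrite -(mul1mx (delta_mx i i)) mxtrace_mul_delta mxE eqxx.
Qed.

End PositiveSemidefinite.

Section TwoQubitCorrelations.
Variable C : numClosedFieldType.

Definition tensor_col m n (f : 'I_m -> 'I_n -> C) : 'cV[C]_(m * n) :=
  \col_k f (split_idx k).1 (split_idx k).2.

Lemma form_tensor_col m n (f : 'I_m -> 'I_n -> C) (K : 'M[C]_(m * n)) :
  (adjmx (tensor_col f) *m K *m tensor_col f) 0 0 = \sum_i1 \sum_i2 \sum_j1 \sum_j2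
     (f i1 i2)^* * K (mxvec_index i1 i2) (mxvec_index j1 j2) * f j1 j2.
Proof.
rewrite mxE big_mxvec_index.
under eq_bigr => j1 _ do under eq_bigr => j2 _ do rewrite mxE big_distrl big_mxvec_index /=.
rewrite pair_big; under eq_bigr => p _ do rewrite pair_big /=.
rewrite exchange_big /= [RHS]pair_big; under [RHS]eq_bigr => p _ do rewrite pair_big /=.
apply: eq_bigr => p _; apply: eq_bigr => q _.
by rewrite !mxE !split_idx_mxvec_index.
Qed.

Lemma norm_tensor_col m n (f : 'I_m -> 'I_n -> C) :
  (adjmx (tensor_col f) *m tensor_col f) 0 0 = \sum_i1 \sum_i2 (f i1 i2)^* * f i1 i2.
Proof.
rewrite mxE big_mxvec_index; apply: eq_bigr => i _; apply: eq_bigr => j _.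
by rewrite !mxE split_idx_mxvec_index.
Qed.

Definition corr (rho : 'M[C]_(2 * 2)) (x y : bool) : C :=
  \tr (kron (obs C x) (obs C y) *m rho).

(* Sum-of-squares certificate: with [al = s2 + 'i s1], the operator
   [2 sqrt2 - s1 (XY + YX) - s2 (XX - YY)] equals
   [sqrt2 |w><w| + 2 sqrt2 (|01><01| + |10><10|)], where [w = sqrt2 |00> - al |11>]. *)
Lemma corr_chsh_le (rho : 'M[C]_(2 * 2)) (b1 b2 : bool) : is_state rho ->
  (-1) ^+ b1 * (corr rho false true + corr rho true false)
  + (-1) ^+ b2 * (corr rho false false - corr rho true true) <= 2 * sqrtC 2.
Proof.
move=> [hp htr]; set s1 : C := (-1) ^+ b1; set s2 : C := (-1) ^+ b2.
have h1 : s1 * s1 = 1 by rewrite -expr2 sqrr_sign.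
have h2 : s2 * s2 = 1 by rewrite -expr2 sqrr_sign.
have c1 : s1^* = s1 by rewrite rmorph_sign.
have c2 : s2^* = s2 by rewrite rmorph_sign.
set s := sqrtC 2.
have hs : s * s = 2 by rewrite -expr2 sqrtCK.
have s0 : 0 <= s by rewrite sqrtC_ge0 ler0n.
have cs : s^* = s by rewrite geC0_conj.
have hi : ('i : C) * 'i = -1 by rewrite -expr2 sqrCi.
set al := s2 + 'i * s1.
pose w := tensor_col (fun i j : 'I_2 => if (val i == 0%N) && (val j == 0%N) then s
               else if (val i == 1%N) && (val j == 1%N) then - al else 0).
pose u := tensor_col (fun i j : 'I_2 => if (val i == 0%N) && (val j == 1%N) then 1 else 0).
pose v := tensor_col (fun i j : 'I_2 => if (val i == 1%N) && (val j == 0%N) then 1 else 0).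
have sos : 2 * s * \tr rho - (s1 * (corr rho false true + corr rho true false)
   + s2 * (corr rho false false - corr rho true true))
  = s * (adjmx w *m rho *m w) 0 0 + 2 * s * (adjmx u *m rho *m u) 0 0
    + 2 * s * (adjmx v *m rho *m v) 0 0.
  rewrite /corr !mxtrace_kron_mul mxtrace_mxvec_index !form_tensor_col.
  rewrite !big_ord_recl !big_ord0 /=.
  rewrite !mxE /= /al !rmorph0 !rmorph1 !rmorphN !rmorphD !rmorphM /= conjCi c1 c2 cs.
  ring: hi hs h1 h2.
have : 0 <= 2 * s * \tr rho - (s1 * (corr rho false true + corr rho true false)
   + s2 * (corr rho false false - corr rho true true)).
  by rewrite sos !addr_ge0 // mulr_ge0 ?mulr_ge0 ?ler0n //; apply: hp.
by rewrite htr mulr1 subr_ge0.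
Qed.

Lemma corr_chsh_mix_le (rho : 'M[C]_(2 * 2)) (R : bool -> bool -> C) :
  is_state rho -> cond_dist R ->
  (R false false - R true false) * (corr rho false true + corr rho true false)
  + (R false true - R true true) * (corr rho false false - corr rho true true)
  <= 2 * sqrtC 2.
Proof.
move=> hrho [R0 R1].
set e1 := corr rho false true + corr rho true false.
set e2 := corr rho false false - corr rho true true.
set p := R false false; set t := R true false; set q := R false true; set u := R true true.
have ht : t = 1 - p by rewrite -(R1 false) addrC addKr.
have hu : u = 1 - q by rewrite -(R1 true) addrC addKr.
pose wt b1 b2 := (if b1 then t else p) * (if b2 then u else q).
have -> : (p - t) * e1 + (q - u) * e2 =
    \sum_(b1 : bool) \sum_(b2 : bool) wt b1 b2 * ((-1) ^+ b1 * e1 + (-1) ^+ b2 * e2).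
  by rewrite !big_bool /wt /= ht hu; ring.
have -> : 2 * sqrtC 2 = \sum_(b1 : bool) \sum_(b2 : bool) wt b1 b2 * (2 * sqrtC 2).
  by rewrite !big_bool /wt /= ht hu; ring.
apply: ler_sum => b1 _; apply: ler_sum => b2 _.
apply: ler_wpM2l; last exact: corr_chsh_le.
by apply: mulr_ge0; [case: b1 | case: b2]; exact: R0.
Qed.

End TwoQubitCorrelations.

Section MerminFunctional.
Variable C : numClosedFieldType.

Definition mermin_functional (P : behaviour C) : C :=
  \sum_(a : bool) \sum_(b : bool) \sum_(c : bool) (-1) ^+ (a (+) b (+) c) *
   (P a b c false false true + P a b c false true false + P a b c true false false
    - P a b c true true true).

Lemma eq_mermin_functional (P Q : behaviour C) :
  (forall a b c x y z, P a b c x y z = Q a b c x y z) ->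
  mermin_functional P = mermin_functional Q.
Proof. by move=> eqPQ; do 3 (apply: eq_bigr => ? _); rewrite !eqPQ. Qed.

Lemma mermin_functional_mermin V : mermin_functional (mermin V) = 4 * V.
Proof. by rewrite /mermin_functional !big_bool /mermin /=; field. Qed.

Lemma mermin_functional_sum n (F : 'I_n -> behaviour C) :
  mermin_functional (fun a b c x y z => \sum_l F l a b c x y z)
  = \sum_l mermin_functional (F l).
Proof.
rewrite /mermin_functional.
under eq_bigr => a _ do under eq_bigr => b _ do under eq_bigr => c _ do
  rewrite -!big_split /= -sumrB mulr_sumr.
under eq_bigr => a _ do under eq_bigr => b _ do rewrite exchange_big.
under eq_bigr => a _ do rewrite exchange_big.
by rewrite exchange_big.
Qed.

Lemma mermin_functional_prod (T : bool -> bool -> bool -> bool -> C)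
    (R : bool -> bool -> C) (r : C) :
  let E x y := T false false x y - T false true x y - T true false x y + T true true x y in
  mermin_functional (fun a b c x y z => r * T a b x y * R c z) =
  r * ((R false false - R true false) * (E false true + E true false)
     + (R false true - R true true) * (E false false - E true true)).
Proof. by rewrite /mermin_functional !big_bool /=; ring. Qed.

Lemma proj_ofB (O : 'M[C]_2) : proj_of O false - proj_of O true = O.
Proof. by apply/matrixP => i j; rewrite !mxE; field. Qed.

Lemma mxtrace_kron_proj_comb (K : 'M[C]_(2 * 2)) x y :
  let T a b := \tr (kron (MA C a x) (MB C b y) *m K) in
  T false false - T false true - T true false + T true true = corr K x y.
Proof.
have eA : MA C false x - MA C true x = obs C x := proj_ofB _.
have eB : MB C false y - MB C true y = obs C y := proj_ofB _.
move=> T; rewrite /T /corr -eA -eB kronBl !kronBr !mulmxBl !linearB.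
ring.
Qed.

Definition two_qubit_mixture (P : behaviour C) : Prop :=
  exists (n : nat) (r : 'I_n -> C) (rho : 'I_n -> 'M[C]_(2 * 2))
         (R : 'I_n -> bool -> bool -> C),
    prob_vec r /\ (forall l, is_state (rho l)) /\ (forall l, cond_dist (R l))
    /\ forall a b c x y z,
         P a b c x y z = \sum_l r l * \tr (kron (MA C a x) (MB C b y) *m rho l) * R l c z.

Lemma mixture_mermin_functional_le (P : behaviour C) :
  two_qubit_mixture P -> mermin_functional P <= 2 * sqrtC 2.
Proof.
move=> [n [r [rho [R [[r0 r1] [hrho [hR hP]]]]]]].
rewrite (eq_mermin_functional hP) mermin_functional_sum.
under eq_bigr => l _ do rewrite mermin_functional_prod !mxtrace_kron_proj_comb.
have -> : 2 * sqrtC 2 = \sum_l r l * (2 * sqrtC 2) by rewrite -mulr_suml r1 mul1r.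
by apply: ler_sum => l _; apply: ler_wpM2l => //; apply: corr_chsh_mix_le.
Qed.

Lemma lhs_lhv_mixture (P : behaviour C) : lhs_lhv P -> two_qubit_mixture P.
Proof.
move=> [n [q [rA [rB [pl [hq [hA [hB [hpl hP]]]]]]]]].
exists n, q, (fun l => kron (rA l) (rB l)), pl; split=> //.
split=> [l|]; last split=> [//|a b c x y z].
  have [[pA trA] [pB trB]] := (hA l, hB l).
  by split; [exact: psd_kron | rewrite mxtrace_kron trA trB mulr1].
by rewrite hP; apply: eq_bigr => l _; rewrite mulmx_kron mxtrace_kron mulrA.
Qed.

Lemma ab_c_separable_mixture (P : behaviour C) :
  ab_c_separable_model P -> two_qubit_mixture P.
Proof.
move=> [d [n [r [rAB [rC [N [hr [hAB [hC [hN hP]]]]]]]]]].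
exists n, r, rAB, (fun l c z => \tr (N c z *m rC l)); do 2 split=> //.
split=> [l|a b c x y z].
  have [pC trC] := hC l; split=> [c z|z].
    by apply: mxtrace_mul_psd_ge0 => //; case: (hN z).
  by rewrite -mxtraceD -mulmxDl; case: (hN z) => _ ->; rewrite mul1mx.
rewrite hP mulmx_sumr linear_sum /=; apply: eq_bigr => l _.
by rewrite -scalemxAr mxtraceZ mulmx_kron mxtrace_kron mulrA.
Qed.

Lemma mermin_not_mixture (V : C) : 1 / sqrtC 2 < V -> ~ two_qubit_mixture (mermin V).
Proof.
move=> hV /mixture_mermin_functional_le; rewrite mermin_functional_mermin.
have s2 : sqrtC 2 * sqrtC 2 = 2 :> C by rewrite -expr2 sqrtCK.
have s0 : sqrtC 2 != 0 :> C by rewrite sqrtC_eq0 pnatr_eq0.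
have -> : 2 * sqrtC 2 = 4 * (1 / sqrtC 2) :> C.
  by apply: (mulIf s0); rewrite -mulrA s2 div1r divfK //; ring.
rewrite ler_pM2l ?ltr0n // => hle.
by have := lt_le_trans hV hle; rewrite ltxx.
Qed.

End MerminFunctional.

Section SeparableModel.
Variable C : numClosedFieldType.

Definition corr_vec (g : C) : 'cV[C]_(2 * 2) :=
  tensor_col (fun i j : 'I_2 => if (val i == 0%N) && (val j == 0%N) then 1
                                else if (val i == 1%N) && (val j == 1%N) then g else 0).

Definition ket11 : 'cV[C]_(2 * 2) :=
  tensor_col (fun i j : 'I_2 => if (val i == 1%N) && (val j == 1%N) then 1 else 0).

Definition corr_state (g : C) : 'M[C]_(2 * 2) :=
  2^-1 *: (corr_vec g *m adjmx (corr_vec g) + (1 - g * g^*) *: (ket11 *m adjmx ket11)).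

Lemma corr_state_is_state g : g * g^* <= 1 -> is_state (corr_state g).
Proof.
rewrite -subr_ge0 => hg; split.
  apply: psdZ; first by rewrite invr_ge0 ler0n.
  by apply: psdD; [apply: psd_outer | apply: psdZ => //; apply: psd_outer].
rewrite /corr_state mxtraceZ mxtraceD mxtraceZ.
rewrite !(mxtrace_mulC (tensor_col _)) !trace_mx11 !norm_tensor_col.
by rewrite !big_ord_recl !big_ord0 /= !rmorph0 !rmorph1; field.
Qed.

Lemma mxtrace_kron_corr_state (A B : 'M[C]_2) g :
  let i0 : 'I_2 := ord0 in let i1 : 'I_2 := lift ord0 ord0 in
  \tr (kron A B *m corr_state g) = 2^-1 * (A i0 i0 * B i0 i0 + A i1 i1 * B i1 i1
     + g * (A i0 i1 * B i0 i1) + g^* * (A i1 i0 * B i1 i0)).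
Proof.
rewrite /= /corr_state -scalemxAr mxtraceZ mulmxDr mxtraceD -scalemxAr mxtraceZ.
rewrite !mxtrace_mul_outer !form_tensor_col.
by rewrite !big_ord_recl !big_ord0 /= !rmorph0 !rmorph1 !kronE; ring.
Qed.

(* Charlie's classical register [l : 'I_4] stores two bits; on input [z] he outputs one. *)
Definition charlie_bit (l : 'I_4) (z : bool) : bool :=
  if z then (2 <= val l)%N else odd (val l).

Definition charlie_povm (c z : bool) : 'M[C]_4 :=
  diag_mx (\row_l (if c == charlie_bit l z then 1 else 0)).

Lemma charlie_povm_is_povm z : is_povm (charlie_povm^~ z).
Proof.
split=> [c|]; first by apply: psd_diag => i; rewrite mxE; case: ifP.
apply/matrixP => i j; rewrite !mxE.
by case: (charlie_bit i z); rewrite /= mul0rn ?add0r ?addr0.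
Qed.

Definition phase (V : C) (l : 'I_4) : C :=
  V * ((-1) ^+ charlie_bit l true + 'i * (-1) ^+ charlie_bit l false).

Lemma conj_phase V l : V^* = V ->
  (phase V l)^* = V * ((-1) ^+ charlie_bit l true - 'i * (-1) ^+ charlie_bit l false).
Proof. by move=> cV; rewrite rmorphM rmorphD rmorphM /= conjCi !rmorph_sign cV mulNr. Qed.

Lemma phase_mul_conj V l : V^* = V -> phase V l * (phase V l)^* = 2 * (V * V).
Proof.
move=> cV; rewrite conj_phase //.
have hi : ('i : C) * 'i = -1 by rewrite -expr2 sqrCi.
have s1 : ((-1) ^+ charlie_bit l true) ^+ 2 = 1 :> C := sqrr_sign _ _.
have s2 : ((-1) ^+ charlie_bit l false) ^+ 2 = 1 :> C := sqrr_sign _ _.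
by rewrite /phase; ring: hi s1 s2.
Qed.

Lemma proj_of_entries a x :
  let i0 : 'I_2 := ord0 in let i1 : 'I_2 := lift ord0 ord0 in
  [/\ MA C a x i0 i0 = 2^-1, MA C a x i1 i1 = 2^-1,
      MA C a x i0 i1 = (-1) ^+ a * 2^-1 * (if x then - 'i else 1)
    & MA C a x i1 i0 = (-1) ^+ a * 2^-1 * (if x then 'i else 1)].
Proof.
have e01 : ((ord0 : 'I_2) == lift ord0 ord0) = false by [].
have e10 : ((lift ord0 ord0 : 'I_2) == ord0) = false by [].
by case: a; case: x; rewrite /MA /proj_of /obs /sigma_x /sigma_y !mxE ?e01 ?e10 ?eqxx /=;
  split; field.
Qed.

Lemma mermin_separable_mixture V a b c x y z : V^* = V ->
  mermin V a b c x y z =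
  \sum_(l < 4) 4^-1 * (\tr (kron (MA C a x) (MB C b y) *m corr_state (phase V l))
                       * \tr (charlie_povm c z *m delta_mx l l)).
Proof.
move=> cV.
under eq_bigr => l _ do rewrite mxtrace_kron_corr_state mxtrace_mul_delta conj_phase //.
have hi : ('i : C) * 'i = -1 by rewrite -expr2 sqrCi.
rewrite [MB C b y]/MB -/(MA C b y).
have [-> -> -> ->] := proj_of_entries a x; have [-> -> -> ->] := proj_of_entries b y.
rewrite !big_ord_recl big_ord0 /phase /charlie_bit /charlie_povm !mxE !eqxx /=.
rewrite /mermin !signr_addb.
by case: a; case: b; case: c; case: x; case: y; case: z => /=; field: hi.
Qed.

Lemma mermin_ab_c_separable (V : C) :
  0 < V -> V <= 1 / sqrtC 2 -> ab_c_separable_model (mermin V).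
Proof.
move=> hV0 hV.
have cV : V^* = V by apply/geC0_conj/ltW.
exists 4%N, 4%N, (fun _ => 4^-1), (fun l => corr_state (phase V l)),
  (fun l => delta_mx l l), charlie_povm.
split.
  split=> [l|]; first by rewrite invr_ge0 ler0n.
  by rewrite !big_ord_recl big_ord0; field.
split.
  move=> l; apply: corr_state_is_state; rewrite phase_mul_conj //.
  have s2 : (1 / sqrtC 2) * (1 / sqrtC 2) = 2^-1 :> C.
    by rewrite !div1r -invfM -expr2 sqrtCK.
  have : V * V <= 2^-1 by rewrite -s2 ler_pM // ltW.
  by rewrite -(ler_pM2l (_ : 0 < 2)) ?ltr0n // mulfV ?pnatr_eq0.
split; first by move=> l; apply: delta_mx_state.
split; first exact: charlie_povm_is_povm.
move=> rho a b c x y z; rewrite /rho mulmx_sumr linear_sum /= mermin_separable_mixture //.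
apply: eq_bigr => l _.
by rewrite -[in RHS]scalemxAr [in RHS]mxtraceZ mulmx_kron mxtrace_kron.
Qed.

End SeparableModel.

Unset Implicit Arguments.

Theorem proposition6 (C : numClosedFieldType) (V : C) (hV0 : 0 < V) (hV1 : V <= 1) :
  tripartite_steering (mermin V) <-> 1 / sqrtC 2 < V.
Proof.
split=> [[_ not_separable] | hV].
  have s0 : 0 < 1 / sqrtC 2 :> C by rewrite div1r invr_gt0 sqrtC_gt0 ltr0n.
  rewrite real_ltNge ?gtr0_real //; apply/negP => hle.
  exact/not_separable/mermin_ab_c_separable.
by split=> [/lhs_lhv_mixture | /ab_c_separable_mixture]; apply: mermin_not_mixture.
Qed.
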